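(* There exists no lifting, with respect to the functor $\operatorname{Con}_c$, of the diagram $\mathcal D_{ac}$ by a diagram of lattices and lattice homomorphisms in which the three lattices corresponding to $S_0,S_1,S_2$ have almost permutable congruences.
   Context: Posets are viewed as categories; a $P$-diagram is a functor from $P$. $\operatorname{Con}_c$ sends a lattice to its $\{\vee,0\}$-semilattice of compact congruences and a lattice homomorphism $f\colon K\to L$ to the map sending a compact congruence $\alpha$ of $K$ to the congruence of $L$ generated by $\{(f(x),f(y)):(x,y)\in\alpha\}$. A $P$-diagram $\mathcal L$ of lattices lifts a $P$-diagram $\mathcal S$ of semilattices if $\operatorname{Con}_c\circ\mathcal L\cong\mathcal S$ (natural isomorphism). A lattice has almost permutable congruences if $\alpha\vee\beta=\alpha\beta\cup\beta\alpha$ for all congruences $\alpha,\beta$, where $\alpha\beta=\{(x,y):\exists z,(x,z)\in\alpha,(z,y)\in\beta\}$. The diagram $\mathcal D_{ac}$ is indexed by $\mathcal P(\{0,1,2\})$ under inclusion. Let $U=\mathcal P(\{0,\dots,7\})$ with union and $\varnothing$. Put $\xi_0=\{0,4,7\},\xi_1=\{3,5,6\},\xi_2=\{2,5,6\},\xi_3=\{1,4,7\}$; $\eta_0=\{0,4,5,7\},\eta_1=\{1,4,6,7\},\eta_2=\{2,5,6,7\},\eta_3=\{3,4,5,6\}$; $\zeta_0=\{0,4,6\},\zeta_1=\{1,5,7\},\zeta_2=\{3,5,7\},\zeta_3=\{2,4,6\}$; $\alpha_0=\{0,1,4,5,6,7\},\beta_0=\{2,3,4,5,6,7\}$; $\alpha_1=\{0,3,4,5,6,7\},\beta_1=\{1,2,4,5,6,7\}$;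 $\alpha_2=\{0,2,4,5,6,7\},\beta_2=\{1,3,4,5,6,7\}$. Let $T_0$ (resp. $T_1$, $T_2$) be the $\{\vee,0\}$-subsemilattice of $U$ generated by the $\xi_j$ (resp. $\eta_j$, $\zeta_j$), $j<4$; $S_i$ ($i<3$) the one generated by $\{\alpha_i,\beta_i\}$; $\mathbf 2=\{\varnothing,\{0,\dots,7\}\}$. Then $S_i\subseteq T_j$ for $i\neq j$, and $\mathcal D_{ac}$ assigns $\mathbf 2$ to $\varnothing$, $S_i$ to $\{i\}$, $T_j$ to $\{0,1,2\}\setminus\{j\}$, $U$ to $\{0,1,2\}$, with inclusion maps. *)

(* lattices are an
   explicit record so that arbitrary (possibly infinite) lattices on any
   Type are allowed. *)
From Stdlib Require List.
From mathcomp Require Import all_boot.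
Set Implicit Arguments. Unset Strict Implicit. Unset Printing Implicit Defensive.

Record lattice := Lattice {
  carrier :> Type;
  meet : carrier -> carrier -> carrier;
  join : carrier -> carrier -> carrier;
  meetC : forall x y, meet x y = meet y x;
  joinC : forall x y, join x y = join y x;
  meetA : forall x y z, meet x (meet y z) = meet (meet x y) z;
  joinA : forall x y z, join x (join y z) = join (join x y) z;
  meetKj : forall x y, meet x (join x y) = x;
  joinKm : forall x y, join x (meet x y) = x
}.

Definition is_lattice_hom (K L : lattice) (g : K -> L) : Prop :=
  forall x y, g (meet x y) = meet (g x) (g y) /\ g (join x y) = join (g x) (g y).

Definition lrel (L : lattice) := L -> L -> Prop.

Definition subrel (L : lattice) (a b : lrel L) : Prop :=
  forall x y, a x y -> b x y.

Definition is_congruence (L : lattice) (t : lrel L) : Prop :=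
  [/\ (forall x, t x x),
      (forall x y, t x y -> t y x),
      (forall x y z, t x y -> t y z -> t x z) &
      (forall x1 y1 x2 y2, t x1 y1 -> t x2 y2 ->
          t (meet x1 x2) (meet y1 y2) /\ t (join x1 x2) (join y1 y2))].

Definition cong_gen (L : lattice) (R : lrel L) : lrel L :=
  fun x y => forall t : lrel L, is_congruence t -> subrel R t -> t x y.

Definition cong_join (L : lattice) (a b : lrel L) : lrel L :=
  cong_gen (fun x y => a x y \/ b x y).

Definition cong_zero (L : lattice) : lrel L := fun x y => x = y.

Definition is_compact_congruence (L : lattice) (t : lrel L) : Prop :=
  is_congruence t /\
  forall (I : Type) (b : I -> lrel L),
    (forall i, is_congruence (b i)) ->
    subrel t (cong_gen (fun x y => exists i, b i x y)) ->
    exists s : list I,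
      subrel t (cong_gen (fun x y => exists i, List.In i s /\ b i x y)).

Definition Conc_map (K L : lattice) (g : K -> L) (t : lrel K) : lrel L :=
  cong_gen (fun u v => exists x y, t x y /\ u = g x /\ v = g y).

Definition rcomp (L : lattice) (a b : lrel L) : lrel L :=
  fun x y => exists z, a x z /\ b z y.

Definition almost_permutable (L : lattice) : Prop :=
  forall a b : lrel L, is_congruence a -> is_congruence b ->
    forall x y, cong_join a b x y <-> (rcomp a b x y \/ rcomp b a x y).

Definition s8 (l : seq nat) : {set 'I_8} := [set i : 'I_8 | val i \in l].

Definition xi0 := s8 [:: 0; 4; 7].   Definition xi1 := s8 [:: 3; 5; 6].
Definition xi2 := s8 [:: 2; 5; 6].   Definition xi3 := s8 [:: 1; 4; 7].
Definition eta0 := s8 [:: 0; 4; 5; 7]. Definition eta1 := s8 [:: 1; 4; 6; 7].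
Definition eta2 := s8 [:: 2; 5; 6; 7]. Definition eta3 := s8 [:: 3; 4; 5; 6].
Definition zeta0 := s8 [:: 0; 4; 6]. Definition zeta1 := s8 [:: 1; 5; 7].
Definition zeta2 := s8 [:: 3; 5; 7]. Definition zeta3 := s8 [:: 2; 4; 6].
Definition alpha0 := s8 [:: 0; 1; 4; 5; 6; 7]. Definition beta0 := s8 [:: 2; 3; 4; 5; 6; 7].
Definition alpha1 := s8 [:: 0; 3; 4; 5; 6; 7]. Definition beta1 := s8 [:: 1; 2; 4; 5; 6; 7].
Definition alpha2 := s8 [:: 0; 2; 4; 5; 6; 7]. Definition beta2 := s8 [:: 1; 3; 4; 5; 6; 7].

Definition i3 (n : nat) : 'I_3 := inord n.

(* generators of the {\/,0}-subsemilattice of U assigned to each p *)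
Definition Dac_gens (p : {set 'I_3}) : seq {set 'I_8} :=
  if p == set0 then [:: setT]                                   (* 2 *)
  else if p == [set i3 0] then [:: alpha0; beta0]
  else if p == [set i3 1] then [:: alpha1; beta1]
  else if p == [set i3 2] then [:: alpha2; beta2]
  else if p == [set i3 1; i3 2] then [:: xi0; xi1; xi2; xi3]    (* T_0 *)
  else if p == [set i3 0; i3 2] then [:: eta0; eta1; eta2; eta3] (* T_1 *)
  else if p == [set i3 0; i3 1] then [:: zeta0; zeta1; zeta2; zeta3] (* T_2 *)
  else [seq [set i] | i : 'I_8].                                (* U *)

Definition Dac (p : {set 'I_3}) (X : {set 'I_8}) : Prop :=
  exists m : bitseq, X = \bigcup_(Y <- mask m (Dac_gens p)) Y.

Definition is_lattice_diagram (L : {set 'I_3} -> lattice)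
    (f : forall p q : {set 'I_3}, p \subset q -> L p -> L q) : Prop :=
  [/\ (forall (p q : {set 'I_3}) (h : p \subset q), is_lattice_hom (f p q h)),
      (forall (p : {set 'I_3}) (h : p \subset p) x, f p p h x = x) &
      (forall p q r : {set 'I_3}, forall (hpq : p \subset q) (hqr : q \subset r) (hpr : p \subset r) x,
          f p r hpr x = f q r hqr (f p q hpq x))].

(* Con_c o L is naturally isomorphic to D_ac: for each p a
   {\/,0}-semilattice isomorphism phi_p : Con_c (L p) -> D_ac(p),
   natural w.r.t. the inclusion maps of D_ac. *)
Definition lifts_Dac (L : {set 'I_3} -> lattice)
    (f : forall p q : {set 'I_3}, p \subset q -> L p -> L q) : Prop :=
  exists phi : forall p, lrel (L p) -> {set 'I_8},
  (forall p t, is_compact_congruence t -> Dac p (phi p t)) /\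
      (forall p t1 t2, is_compact_congruence t1 -> is_compact_congruence t2 ->
          phi p t1 = phi p t2 -> forall x y, t1 x y <-> t2 x y) /\
      (forall p X, Dac p X ->
          exists t, is_compact_congruence t /\ phi p t = X) /\
      (forall p t1 t2, is_compact_congruence t1 -> is_compact_congruence t2 ->
          phi p (cong_join t1 t2) = phi p t1 :|: phi p t2) /\
      (forall p, phi p (@cong_zero (L p)) = set0) /\
      (forall (p q : {set 'I_3}) (h : p \subset q) t, is_compact_congruence t ->
          phi q (Conc_map (f p q h) t) = phi p t).

(* Write [psi p x y] for the image in D_ac(p) of the principal congruence
   Theta(x, y) of [L p]; it is monotone in Theta, satisfies the triangle
   inequality, and is additive along chains x <= y <= z.  Since
   Con_c L_0 = 2, some a <= b in the bottom lattice has psi(a, b) = U.  In the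
   lattice over {i}, Theta(a, b) lies below alpha_i \/ beta_i, and almost
   permutability yields a <= z_i <= b with Theta(a, z_i) and Theta(z_i, b) below
   alpha_i and beta_i, in some order.  Splitting at z_i /\ z_k in the lattice
   over {i, k} writes psi_U(z_i, z_k) as Y \/ Z with Y, Z in T_j, constrained by
   the intervals between a, z_i, z_k and b.  A finite search through the S_i and
   T_j shows these constraints to be incompatible with the triangle inequality
   psi_U(z_0, z_2) <= psi_U(z_0, z_1) \/ psi_U(z_1, z_2). *)

From mathcomp Require Import all_boot.
From Stdlib Require Import FunctionalExtensionality PropExtensionality.
Set Implicit Arguments. Unset Strict Implicit. Unset Printing Implicit Defensive.

Section LatticeFacts.
Variable L : lattice.
Implicit Types x y z : L.

Definition lat_le x y : Prop := meet x y = x.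

Lemma meetxx x : meet x x = x.
Proof. by rewrite -{2}(joinKm x x) meetKj. Qed.

Lemma joinxx x : join x x = x.
Proof. by rewrite -{2}(meetKj x x) joinKm. Qed.

Lemma lat_le_join x y : lat_le x y -> join x y = y.
Proof. by move=> <-; rewrite joinC meetC joinKm. Qed.

Lemma lat_le_meetl x y : lat_le (meet x y) x.
Proof. by rewrite /lat_le meetC meetA meetxx. Qed.

Lemma lat_le_meetr x y : lat_le (meet x y) y.
Proof. by rewrite /lat_le -meetA meetxx. Qed.

Lemma lat_le_meet_join x y : lat_le (meet x y) (join x y).
Proof. by rewrite /lat_le -meetA (joinC x) meetKj. Qed.

Lemma lat_le_meet x y z : lat_le x y -> lat_le x z -> lat_le x (meet y z).
Proof. by rewrite /lat_le => hy hz; rewrite meetA hy hz. Qed.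

End LatticeFacts.

Lemma lat_le_hom (K L : lattice) (g : K -> L) x y :
  is_lattice_hom g -> lat_le x y -> lat_le (g x) (g y).
Proof. by move=> hg hxy; rewrite /lat_le -(proj1 (hg x y)) hxy. Qed.

Section Congruences.
Variable L : lattice.
Implicit Types (x y z : L) (R t : lrel L).

Lemma lrel_ext (a b : lrel L) : (forall x y, a x y <-> b x y) -> a = b.
Proof.
move=> eab; do 2![apply: functional_extensionality => ?].
exact: propositional_extensionality.
Qed.

Lemma cong_refl t x : is_congruence t -> t x x.
Proof. by case=> h _ _ _; exact: h. Qed.

Lemma cong_sym t x y : is_congruence t -> t x y -> t y x.
Proof. by case=> _ h _ _; exact: h. Qed.

Lemma cong_trans t y x z : is_congruence t -> t x y -> t y z -> t x z.
Proof. by case=> _ _ h _; exact: h. Qed.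

Lemma cong_meetr t z x y : is_congruence t -> t x y -> t (meet x z) (meet y z).
Proof. by case=> h _ _ hc txy; case: (hc _ _ _ _ txy (h z)). Qed.

Lemma cong_joinr t z x y : is_congruence t -> t x y -> t (join x z) (join y z).
Proof. by case=> h _ _ hc txy; case: (hc _ _ _ _ txy (h z)). Qed.

Lemma cong_gen_cong R : is_congruence (cong_gen R).
Proof.
split.
- by move=> x t ct _; exact: cong_refl.
- by move=> x y gxy t ct hR; apply: cong_sym ct (gxy t ct hR).
- by move=> x y z gxy gyz t ct hR; apply: cong_trans ct (gxy t ct hR) (gyz t ct hR).
- move=> x1 y1 x2 y2 g1 g2; split=> t [h1 h2 h3 hc] hR;
  by have [] := hc _ _ _ _ (g1 t (And4 h1 h2 h3 hc) hR) (g2 t (And4 h1 h2 h3 hc) hR).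
Qed.

Lemma cong_gen_sub R : subrel R (cong_gen R).
Proof. by move=> x y h t _ hR; exact: hR. Qed.

Lemma cong_gen_min R t : is_congruence t -> subrel R t -> subrel (cong_gen R) t.
Proof. by move=> ct hR x y g; exact: g t ct hR. Qed.

Lemma cong_join_min t1 t2 t :
  is_congruence t -> subrel t1 t -> subrel t2 t -> subrel (cong_join t1 t2) t.
Proof. by move=> ct h1 h2; apply: cong_gen_min => // x y [/h1|/h2]. Qed.

Lemma cong_join_subl t1 t2 : subrel t1 (cong_join t1 t2).
Proof. by move=> x y h; apply: cong_gen_sub; left. Qed.

Lemma cong_join_subr t1 t2 : subrel t2 (cong_join t1 t2).
Proof. by move=> x y h; apply: cong_gen_sub; right. Qed.

Lemma cong_gen_mono R R' : subrel R R' -> subrel (cong_gen R) (cong_gen R').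
Proof.
by move=> hR; apply: cong_gen_min; [exact: cong_gen_cong | move=> x y /hR /cong_gen_sub].
Qed.

Definition princ x y : lrel L := cong_gen (fun u v => u = x /\ v = y).

Lemma princ_xy x y : princ x y x y.
Proof. exact: cong_gen_sub. Qed.

Lemma princ_min x y t : is_congruence t -> t x y -> subrel (princ x y) t.
Proof. by move=> ct txy; apply: cong_gen_min => // u v [-> ->]. Qed.

Lemma cong_gen_finite (I : Type) (b : I -> lrel L) x y :
  cong_gen (fun u v => exists i, b i u v) x y ->
  exists s, cong_gen (fun u v => exists i, List.In i s /\ b i u v) x y.
Proof.
pose gen s := cong_gen (fun u v => exists i, List.In i s /\ b i u v).
have gen_mono s s' : (forall i, List.In i s -> List.In i s') -> subrel (gen s) (gen s').
  by move=> ss'; apply: cong_gen_mono => u v [i [/ss' si bi]]; exists i.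
have genl s1 s2 : subrel (gen s1) (gen (s1 ++ s2)).
  by apply: gen_mono => i hi; apply: List.in_or_app; left.
have genr s1 s2 : subrel (gen s2) (gen (s1 ++ s2)).
  by apply: gen_mono => i hi; apply: List.in_or_app; right.
apply: (cong_gen_min (t := fun u v => exists s, gen s u v)); last first.
  by move=> u v [i bi]; exists [:: i]; apply: cong_gen_sub; exists i; split=> //; left.
split.
- by move=> z; exists [::]; apply: cong_refl (cong_gen_cong _).
- by move=> u v [s hs]; exists s; apply: cong_sym (cong_gen_cong _) hs.
- move=> u v w [s1 h1] [s2 h2]; exists (s1 ++ s2).
  exact: cong_trans (cong_gen_cong _) (genl _ _ _ _ h1) (genr _ _ _ _ h2).
- move=> x1 y1 x2 y2 [s1 h1] [s2 h2].
  case: (cong_gen_cong (fun u v => exists i, List.In i (s1 ++ s2) /\ b i u v)) => _ _ _ hc.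
  by have [e1 e2] := hc _ _ _ _ (genl _ _ _ _ h1) (genr _ _ _ _ h2); split; exists (s1 ++ s2).
Qed.

Lemma compact_zero : is_compact_congruence (@cong_zero L).
Proof.
split; first by split=> [//|x y ->|x y z -> ->|x1 y1 x2 y2 -> ->].
by move=> I b _ _; exists [::] => x y ->; apply: cong_refl (cong_gen_cong _).
Qed.

Lemma compact_princ x y : is_compact_congruence (princ x y).
Proof.
split=> [|I b _ hb]; first exact: cong_gen_cong.
have [s hs] := cong_gen_finite (hb x y (@princ_xy x y)).
by exists s; apply: princ_min (cong_gen_cong _) hs.
Qed.

Lemma compact_join t1 t2 :
  is_compact_congruence t1 -> is_compact_congruence t2 ->
  is_compact_congruence (cong_join t1 t2).
Proof.
move=> [_ k1] [_ k2]; split=> [|I b cb hb]; first exact: cong_gen_cong.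
have [s1 h1] := k1 I b cb (fun x y h => hb x y (cong_join_subl h)).
have [s2 h2] := k2 I b cb (fun x y h => hb x y (cong_join_subr h)).
exists (s1 ++ s2); apply: cong_join_min; first exact: cong_gen_cong.
- move=> x y /h1; apply: cong_gen_mono => u v [i [si bi]].
  by exists i; split=> //; apply: List.in_or_app; left.
- move=> x y /h2; apply: cong_gen_mono => u v [i [si bi]].
  by exists i; split=> //; apply: List.in_or_app; right.
Qed.

Lemma princ_meetr x y z : princ x y (meet x z) (meet y z).
Proof. exact: cong_meetr (cong_gen_cong _) (@princ_xy x y). Qed.

Lemma princ_joinr x y z : princ x y (join x z) (join y z).
Proof. exact: cong_joinr (cong_gen_cong _) (@princ_xy x y). Qed.

Lemma princ_sym x y : princ x y y x.
Proof. exact: cong_sym (cong_gen_cong _) (@princ_xy x y). Qed.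

Lemma princ_trans x y z : cong_join (princ x y) (princ y z) x z.
Proof.
apply: (cong_trans (cong_gen_cong _) (cong_join_subl _)) (cong_join_subr _);
exact: @princ_xy.
Qed.
End Congruences.

Lemma Conc_map_princ (K L : lattice) (g : K -> L) (x y : K) :
  is_lattice_hom g -> Conc_map g (princ x y) = princ (g x) (g y).
Proof.
move=> hg; apply: lrel_ext => u v; split.
- apply: cong_gen_min; first exact: cong_gen_cong.
  move=> _ _ [x' [y' [hxy [-> ->]]]].
  pose t a b := princ (g x) (g y) (g a) (g b).
  suff ct : is_congruence t by exact: princ_min ct (@princ_xy _ (g x) (g y)) _ _ hxy.
  have [c1 c2 c3 c4] := cong_gen_cong (fun a b => a = g x /\ b = g y).
  split=> [a|a b|a b c|x1 y1 x2 y2 h1 h2]; rewrite /t; [exact: c1|exact: c2|exact: c3|].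
  by rewrite !(proj1 (hg _ _)) !(proj2 (hg _ _)); exact: c4.
- apply: princ_min; first exact: cong_gen_cong.
  by apply: cong_gen_sub; exists x, y; split=> //; exact: princ_xy.
Qed.

Lemma princ_meet_join (L : lattice) (x y : L) : princ (meet x y) (join x y) x y.
Proof.
have cg := cong_gen_cong (fun u v => u = meet x y /\ v = join x y).
have mx := @princ_meetr _ (meet x y) (join x y) x.
have my := @princ_meetr _ (meet x y) (join x y) y.
have jx : meet (join x y) x = x by rewrite meetC meetKj.
have jy : meet (join x y) y = y by rewrite meetC joinC meetKj.
rewrite jx lat_le_meetl in mx; rewrite jy lat_le_meetr in my.
exact: cong_trans cg (cong_sym cg mx) my.
Qed.

Lemma interval_representative (L : lattice) (A B : lrel L) (a b z0 : L) :
  is_congruence A -> is_congruence B -> lat_le a b -> A a z0 -> B z0 b ->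
  let z := meet (join z0 a) b in [/\ A a z, B z b, lat_le a z & lat_le z b].
Proof.
move=> cA cB lab Aaz0 Bz0b z; split.
- by have := cong_meetr b cA (cong_joinr a cA Aaz0); rewrite joinxx lab.
- by have := cong_meetr b cB (cong_joinr a cB Bz0b); rewrite (meetC (join b a)) meetKj.
- by rewrite /lat_le /z meetA (joinC z0) meetKj lab.
- exact: lat_le_meetr.
Qed.

Lemma almost_permutable_interval (L : lattice) (A B : lrel L) (a b : L) :
  almost_permutable L -> is_congruence A -> is_congruence B -> lat_le a b ->
  cong_join A B a b ->
  exists2 z, lat_le a z /\ lat_le z b & (A a z /\ B z b) \/ (B a z /\ A z b).
Proof.
move=> AP cA cB lab /(AP A B cA cB a b) [[z0 [h1 h2]]|[z0 [h1 h2]]].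
- have [Aaz Bzb laz lzb] := interval_representative cA cB lab h1 h2.
  by exists (meet (join z0 a) b); [split|left].
- have [Baz Azb laz lzb] := interval_representative cB cA lab h1 h2.
  by exists (meet (join z0 a) b); [split|right].
Qed.

Section JoinEmbedding.
Variables (K : lattice) (T : finType) (ph : lrel K -> {set T}).
Hypothesis ph_inj : forall t1 t2, is_compact_congruence t1 -> is_compact_congruence t2 ->
  ph t1 = ph t2 -> forall x y, t1 x y <-> t2 x y.
Hypothesis ph_join : forall t1 t2, is_compact_congruence t1 -> is_compact_congruence t2 ->
  ph (cong_join t1 t2) = ph t1 :|: ph t2.
Implicit Types (x y z : K) (t : lrel K).

Lemma ph_mono t1 t2 : is_compact_congruence t1 -> is_compact_congruence t2 ->
  subrel t1 t2 -> ph t1 \subset ph t2.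
Proof.
move=> c1 c2 h12; have <- : cong_join t1 t2 = t2.
  apply: lrel_ext => x y; split; last exact: cong_join_subr.
  by apply: cong_join_min => //; case: c2.
by rewrite ph_join // subsetUl.
Qed.

Lemma ph_reflect t1 t2 : is_compact_congruence t1 -> is_compact_congruence t2 ->
  ph t1 \subset ph t2 -> subrel t1 t2.
Proof.
move=> c1 c2 /setUidPr e12 x y h1.
have [+ _] := ph_inj (compact_join c1 c2) c2 (etrans (ph_join c1 c2) e12) x y.
by apply; exact: cong_join_subl.
Qed.

Definition psi x y := ph (princ x y).

Lemma psi_le_ph t x y : is_compact_congruence t -> t x y -> psi x y \subset ph t.
Proof. by move=> ct txy; apply: ph_mono (compact_princ _ _) ct (princ_min (proj1 ct) txy). Qed.

Lemma psi_mono x y u v : princ x y u v -> psi u v \subset psi x y.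
Proof. exact: psi_le_ph (compact_princ _ _). Qed.

Lemma psi_sym x y : psi x y = psi y x.
Proof. by apply/eqP; rewrite eqEsubset; apply/andP; split; apply: psi_mono; exact: princ_sym. Qed.

Lemma psi_trans y x z : psi x z \subset psi x y :|: psi y z.
Proof.
rewrite /psi -ph_join; try exact: compact_princ.
exact: psi_le_ph (compact_join (compact_princ x y) (compact_princ y z)) (@princ_trans _ x y z).
Qed.

Lemma psi_meetr x y z : psi (meet x z) (meet y z) \subset psi x y.
Proof. by apply: psi_mono; exact: princ_meetr. Qed.

Lemma psi_interval x y z : lat_le x y -> lat_le y z -> psi x z = psi x y :|: psi y z.
Proof.
move=> lxy lyz; apply/eqP; rewrite eqEsubset psi_trans subUset.
have /psi_mono -> : princ x z x y.
  by have := @princ_meetr _ x z y; rewrite lxy meetC lyz.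
have /psi_mono -> // : princ x z y z.
  by have := @princ_joinr _ x z y; rewrite (lat_le_join lxy) joinC (lat_le_join lyz).
Qed.

Lemma psi_meet_split x y : psi x y = psi (meet x y) x :|: psi (meet x y) y.
Proof.
apply/eqP; rewrite eqEsubset subUset (psi_sym (meet x y) x) psi_trans /=.
have := psi_meetr x y x; rewrite meetxx (meetC y x) => -> /=.
by have := psi_meetr x y y; rewrite meetxx.
Qed.

Lemma psi_eq0 x y : ph (@cong_zero K) = set0 -> psi x y = set0 -> x = y.
Proof.
move=> ph0 e.
have [+ _] := ph_inj (compact_princ x y) (compact_zero K) (etrans e (esym ph0)) x y.
by apply; exact: princ_xy.
Qed.

Lemma psi_split_interval A B a b : almost_permutable K ->
  is_compact_congruence A -> is_compact_congruence B -> lat_le a b ->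
  psi a b \subset ph A :|: ph B ->
  exists2 z, lat_le a z /\ lat_le z b &
    (psi a z \subset ph A /\ psi z b \subset ph B) \/
    (psi a z \subset ph B /\ psi z b \subset ph A).
Proof.
move=> AP cA cB lab sab.
have Jab : cong_join A B a b.
  apply: (ph_reflect (compact_princ a b) (compact_join cA cB)); last exact: princ_xy.
  by rewrite ph_join.
have [z lz [[h1 h2]|[h1 h2]]] := almost_permutable_interval AP (proj1 cA) (proj1 cB) lab Jab.
- by exists z => //; left; split; apply: psi_le_ph.
- by exists z => //; right; split; apply: psi_le_ph.
Qed.
End JoinEmbedding.

Lemma i3_eq m n : m < 3 -> n < 3 -> (i3 m == i3 n) = (m == n).
Proof. by move=> hm hn; rewrite -val_eqE /= !inordK. Qed.

Lemma set_neq (T : finType) (A B : {set T}) x : (x \in A) != (x \in B) -> (A == B) = false.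
Proof. by apply: contraNF => /eqP ->. Qed.

Ltac Dac_gens_simpl :=
  rewrite /Dac_gens; repeat first
    [ rewrite eqxx /=
    | rewrite (@set_neq _ _ _ (i3 0)) /=; last by rewrite !inE ?i3_eq
    | rewrite (@set_neq _ _ _ (i3 1)) /=; last by rewrite !inE ?i3_eq
    | rewrite (@set_neq _ _ _ (i3 2)) /=; last by rewrite !inE ?i3_eq ].

Lemma Dac_gens0 : Dac_gens set0 = [:: setT].
Proof. by Dac_gens_simpl. Qed.
Lemma Dac_gensS0 : Dac_gens [set i3 0] = [:: alpha0; beta0].
Proof. by Dac_gens_simpl. Qed.
Lemma Dac_gensS1 : Dac_gens [set i3 1] = [:: alpha1; beta1].
Proof. by Dac_gens_simpl. Qed.
Lemma Dac_gensS2 : Dac_gens [set i3 2] = [:: alpha2; beta2].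
Proof. by Dac_gens_simpl. Qed.
Lemma Dac_gensT0 : Dac_gens [set i3 1; i3 2] = [:: xi0; xi1; xi2; xi3].
Proof. by Dac_gens_simpl. Qed.
Lemma Dac_gensT1 : Dac_gens [set i3 0; i3 2] = [:: eta0; eta1; eta2; eta3].
Proof. by Dac_gens_simpl. Qed.
Lemma Dac_gensT2 : Dac_gens [set i3 0; i3 1] = [:: zeta0; zeta1; zeta2; zeta3].
Proof. by Dac_gens_simpl. Qed.

Lemma Dac0 X : Dac set0 X -> X = set0 \/ X = setT.
Proof.
case=> m ->; rewrite Dac_gens0.
by case: m => [|[] m]; rewrite /= ?mask0 ?big_cons ?big_nil ?setTU; [left|right|left].
Qed.

Lemma Dac0_setT : Dac set0 setT.
Proof. by exists [:: true]; rewrite Dac_gens0 /= big_cons big_nil setU0. Qed.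

Lemma Dac_gens2 p X Y : Dac_gens p = [:: X; Y] -> Dac p X /\ Dac p Y.
Proof.
by move=> gp; split; [exists [:: true; false] | exists [:: false; true]];
  rewrite gp /= big_cons big_nil setU0.
Qed.

Lemma alpha_beta0 : alpha0 :|: beta0 = setT.
Proof. by apply/setP=> -[[|[|[|[|[|[|[|[|//]]]]]]]] ?]; rewrite !inE. Qed.
Lemma alpha_beta1 : alpha1 :|: beta1 = setT.
Proof. by apply/setP=> -[[|[|[|[|[|[|[|[|//]]]]]]]] ?]; rewrite !inE. Qed.
Lemma alpha_beta2 : alpha2 :|: beta2 = setT.
Proof. by apply/setP=> -[[|[|[|[|[|[|[|[|//]]]]]]]] ?]; rewrite !inE. Qed.

(* Subsets of 'I_8 as bit vectors, because finsets do not reduce under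
   [vm_compute]. *)
Definition bits (X : {set 'I_8}) : bitseq := [seq (inord k : 'I_8) \in X | k <- iota 0 8].
Definition bor (u w : bitseq) : bitseq := [seq p.1 || p.2 | p <- zip u w].
Definition bsub (u w : bitseq) : bool := all (fun p => p.1 ==> p.2) (zip u w).

Fixpoint joins (G : seq bitseq) : seq bitseq :=
  if G is g :: G' then joins G' ++ [seq bor g u | u <- joins G'] else [:: nseq 8 false].

Lemma bitsU (A B : {set 'I_8}) : bits (A :|: B) = bor (bits A) (bits B).
Proof. by rewrite /bits /bor; elim: (iota 0 8) => //= k s ->; rewrite inE. Qed.

Lemma bitsS (A B : {set 'I_8}) : A \subset B -> bsub (bits A) (bits B).
Proof.
move=> /subsetP AB; rewrite /bsub /bits.
by elim: (iota 0 8) => //= k s ->; rewrite andbT; apply/implyP => /AB.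
Qed.

Lemma bitsT : bits setT = nseq 8 true.
Proof. by rewrite /bits; under eq_map do rewrite inE. Qed.

Lemma bits_s8 l : bits (s8 l) = [seq k \in l | k <- iota 0 8].
Proof.
by apply/eq_in_map => k; rewrite mem_iota inE => /andP [_ k8]; rewrite /= inordK.
Qed.

Lemma bits_bigcup (s : seq {set 'I_8}) :
  bits (\bigcup_(Y <- s) Y) = foldr bor (nseq 8 false) (map bits s).
Proof.
elim: s => [|Y s IH]; last by rewrite big_cons bitsU IH.
by rewrite big_nil /bits; under eq_map do rewrite inE.
Qed.

Lemma nseq_false_joins G : nseq 8 false \in joins G.
Proof. by elim: G => //= g G IH; rewrite mem_cat IH. Qed.

Lemma foldr_mask_joins G m : foldr bor (nseq 8 false) (mask m G) \in joins G.
Proof.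
by elim: G m => [|g G IH] [|[] m] //=; rewrite mem_cat ?nseq_false_joins ?IH ?map_f ?orbT.
Qed.

Lemma Dac_bits p X : Dac p X -> bits X \in joins (map bits (Dac_gens p)).
Proof. by case=> m ->; rewrite bits_bigcup map_mask foldr_mask_joins. Qed.

Definition top_split (p : {set 'I_3}) (al be c d : {set 'I_8}) : Prop :=
  [/\ Dac p c, Dac p d, c :|: d = setT &
      (c \subset al /\ d \subset be) \/ (c \subset be /\ d \subset al)].

(* In [link_pair] below, X, Y and Z are the images of Theta(a, m), Theta(m, z_i)
   and Theta(m, z_k) in the lattice over q, where m = z_i /\ z_k. *)
Definition link (q : {set 'I_3}) (ci di ck dk W : {set 'I_8}) : Prop :=
  exists X Y Z, [/\ Dac q X, Dac q Y & Dac q Z] /\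
    [/\ X :|: Y = ci, X :|: Z = ck, Y \subset dk, Z \subset di & W = Y :|: Z].

Definition bit_top_splits (al be : bitseq) : seq (bitseq * bitseq) :=
  [seq cd <- [seq (c, d) | c <- joins [:: al; be], d <- joins [:: al; be]] |
     (bor cd.1 cd.2 == nseq 8 true) &&
     (bsub cd.1 al && bsub cd.2 be || bsub cd.1 be && bsub cd.2 al)].

Definition bit_links (S : seq bitseq) (cdi cdk : bitseq * bitseq) : seq bitseq :=
  [seq bor YZ.1 YZ.2 | YZ <- [seq (Y, Z) | Y <- S, Z <- S] &
     [&& has (fun X => (bor X YZ.1 == cdi.1) && (bor X YZ.2 == cdk.1)) S,
         bsub YZ.1 cdk.2 & bsub YZ.2 cdi.2]].

Definition no_bit_triangle (a0 b0 a1 b1 a2 b2 : bitseq) (G0 G1 G2 : seq bitseq) : bool :=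
  all (fun cd0 => all (fun cd1 => all (fun cd2 =>
    all (fun W02 => all (fun W01 => all (fun W12 => ~~ bsub W02 (bor W01 W12))
        (bit_links (joins G0) cd1 cd2))
      (bit_links (joins G2) cd0 cd1))
    (bit_links (joins G1) cd0 cd2))
  (bit_top_splits a2 b2)) (bit_top_splits a1 b1)) (bit_top_splits a0 b0).

Lemma no_bit_triangle_Dac :
  no_bit_triangle (bits alpha0) (bits beta0) (bits alpha1) (bits beta1)
    (bits alpha2) (bits beta2) (map bits (Dac_gens [set i3 1; i3 2]))
    (map bits (Dac_gens [set i3 0; i3 2])) (map bits (Dac_gens [set i3 0; i3 1])).
Proof.
rewrite Dac_gensT0 Dac_gensT1 Dac_gensT2 /= !bits_s8.
by vm_compute.
Qed.

Lemma top_split_bits p al be c d : Dac_gens p = [:: al; be] ->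
  top_split p al be c d -> (bits c, bits d) \in bit_top_splits (bits al) (bits be).
Proof.
move=> gp [/Dac_bits Jc /Dac_bits Jd cd albe]; rewrite gp in Jc Jd.
rewrite mem_filter -bitsU cd bitsT eqxx allpairs_f // andbT.
by case: albe => -[/bitsS -> /bitsS ->]; rewrite ?orbT.
Qed.

Lemma link_bits q ci di ck dk W : link q ci di ck dk W ->
  bits W \in bit_links (joins (map bits (Dac_gens q))) (bits ci, bits di) (bits ck, bits dk).
Proof.
move=> [X [Y [Z [[/Dac_bits JX /Dac_bits JY /Dac_bits JZ] [XY XZ YZ ZY ->]]]]].
rewrite bitsU; apply/mapP; exists (bits Y, bits Z) => //.
rewrite mem_filter allpairs_f // !bitsS // !andbT.
by apply/hasP; exists (bits X) => //; rewrite -!bitsU XY XZ !eqxx.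
Qed.

Lemma Dac_no_triangle c0 d0 c1 d1 c2 d2 W01 W02 W12 :
  top_split [set i3 0] alpha0 beta0 c0 d0 ->
  top_split [set i3 1] alpha1 beta1 c1 d1 ->
  top_split [set i3 2] alpha2 beta2 c2 d2 ->
  link [set i3 0; i3 1] c0 d0 c1 d1 W01 ->
  link [set i3 0; i3 2] c0 d0 c2 d2 W02 ->
  link [set i3 1; i3 2] c1 d1 c2 d2 W12 ->
  ~ W02 \subset W01 :|: W12.
Proof.
move=> /(top_split_bits Dac_gensS0) s0 /(top_split_bits Dac_gensS1) s1.
move=> /(top_split_bits Dac_gensS2) s2 /link_bits l01 /link_bits l02 /link_bits l12.
move=> /bitsS; rewrite bitsU; apply/negP.
move: no_bit_triangle_Dac => /allP/(_ _ s0)/allP/(_ _ s1)/allP/(_ _ s2).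
by move=> /allP/(_ _ l02)/allP/(_ _ l01)/allP/(_ _ l12).
Qed.

Section Lifting.
Implicit Types p q r : {set 'I_3}.
Variables (L : {set 'I_3} -> lattice)
  (f : forall p q : {set 'I_3}, p \subset q -> L p -> L q)
  (phi : forall p, lrel (L p) -> {set 'I_8}).
Arguments phi : clear implicits.
Hypothesis f_hom : forall p q (h : p \subset q), is_lattice_hom (f h).
Hypothesis f_comp : forall p q r (hpq : p \subset q) (hqr : q \subset r) (hpr : p \subset r) x,
  f hpr x = f hqr (f hpq x).
Hypothesis phi_Dac : forall p t, is_compact_congruence t -> Dac p (phi p t).
Hypothesis phi_inj : forall p t1 t2, is_compact_congruence t1 -> is_compact_congruence t2 ->
  phi p t1 = phi p t2 -> forall x y, t1 x y <-> t2 x y.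
Hypothesis phi_onto : forall p X, Dac p X -> exists t, is_compact_congruence t /\ phi p t = X.
Hypothesis phi_join : forall p t1 t2, is_compact_congruence t1 -> is_compact_congruence t2 ->
  phi p (cong_join t1 t2) = phi p t1 :|: phi p t2.
Hypothesis phi_zero : forall p, phi p (@cong_zero (L p)) = set0.
Hypothesis phi_natural : forall p q (h : p \subset q) t, is_compact_congruence t ->
  phi q (Conc_map (f h) t) = phi p t.

Lemma psi_Dac p (x y : L p) : Dac p (psi (phi p) x y).
Proof. exact/phi_Dac/compact_princ. Qed.

Lemma psi_natural p q (h : p \subset q) (x y : L p) :
  psi (phi q) (f h x) (f h y) = psi (phi p) x y.
Proof. by rewrite /psi -Conc_map_princ // phi_natural //; exact: compact_princ. Qed.

Definition lift0 p (x : L set0) : L p := f (sub0set p) x.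

Lemma lift0_comp p q (h : p \subset q) x : f h (lift0 p x) = lift0 q x.
Proof. by rewrite /lift0 (f_comp (sub0set p) h (sub0set q)). Qed.

Section Interval.
Variables a b : L set0.

Lemma link_pair (pi pk q : {set 'I_3}) (hi : pi \subset q) (hk : pk \subset q)
    (zi : L pi) (zk : L pk) :
  lat_le (lift0 pi a) zi -> lat_le zi (lift0 pi b) ->
  lat_le (lift0 pk a) zk -> lat_le zk (lift0 pk b) ->
  link q (psi (phi pi) (lift0 pi a) zi) (psi (phi pi) zi (lift0 pi b))
         (psi (phi pk) (lift0 pk a) zk) (psi (phi pk) zk (lift0 pk b))
         (psi (phi setT) (f (subsetT pi) zi) (f (subsetT pk) zk)).
Proof.
move=> azi zib azk zkb.
set zi' := f hi zi; set zk' := f hk zk; set m := meet zi' zk'.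
have azi' : lat_le (lift0 q a) zi' by rewrite -(lift0_comp hi); exact: lat_le_hom.
have azk' : lat_le (lift0 q a) zk' by rewrite -(lift0_comp hk); exact: lat_le_hom.
have zib' : lat_le zi' (lift0 q b) by rewrite -(lift0_comp hi); exact: lat_le_hom.
have zkb' : lat_le zk' (lift0 q b) by rewrite -(lift0_comp hk); exact: lat_le_hom.
have am : lat_le (lift0 q a) m by exact: lat_le_meet.
exists (psi (phi q) (lift0 q a) m), (psi (phi q) m zi'), (psi (phi q) m zk').
split; first by split; exact: psi_Dac.
split.
- rewrite -(psi_interval (@phi_join q) am (lat_le_meetl zi' zk')).
  by rewrite -(lift0_comp hi) psi_natural.
- rewrite -(psi_interval (@phi_join q) am (lat_le_meetr zi' zk')).
  by rewrite -(lift0_comp hk) psi_natural.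
- have := psi_meetr (@phi_join q) zk' (lift0 q b) zi'.
  by rewrite (meetC zk') (meetC (lift0 q b)) zib' -(lift0_comp hk) psi_natural.
- have := psi_meetr (@phi_join q) zi' (lift0 q b) zk'.
  by rewrite (meetC (lift0 q b)) zkb' -(lift0_comp hi) psi_natural.
- rewrite (f_comp hi (subsetT q)) (f_comp hk (subsetT q)) psi_natural.
  exact: psi_meet_split (@phi_join q) zi' zk'.
Qed.

Lemma top_split_lift i al be : almost_permutable (L [set i]) ->
  lat_le a b -> psi (phi set0) a b = setT ->
  Dac_gens [set i] = [:: al; be] -> al :|: be = setT ->
  exists2 z : L [set i], lat_le (lift0 _ a) z /\ lat_le z (lift0 _ b) &
    top_split [set i] al be (psi (phi _) (lift0 _ a) z) (psi (phi _) z (lift0 _ b)).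
Proof.
move=> AP lab full gi albe; have [Dal Dbe] := Dac_gens2 gi.
have [A [cA eA]] := phi_onto Dal; have [B [cB eB]] := phi_onto Dbe.
have lab' : lat_le (lift0 [set i] a) (lift0 _ b) by exact: lat_le_hom (f_hom _) lab.
have full' : psi (phi [set i]) (lift0 _ a) (lift0 _ b) = setT by rewrite psi_natural.
have sab : psi (phi [set i]) (lift0 _ a) (lift0 _ b) \subset phi _ A :|: phi _ B.
  by rewrite eA eB albe subsetT.
have [z [laz lzb] sz] := psi_split_interval (@phi_inj _) (@phi_join _) AP cA cB lab' sab.
exists z => //; split; [exact: psi_Dac | exact: psi_Dac | | by rewrite -eA -eB].
by rewrite -(psi_interval (@phi_join _) laz lzb).
Qed.

Lemma psi0_interval_neq_setT : (forall i, almost_permutable (L [set i])) ->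
  lat_le a b -> psi (phi set0) a b = setT -> False.
Proof.
move=> AP lab full.
have [z0 [az0 z0b] s0] := top_split_lift (AP _) lab full Dac_gensS0 alpha_beta0.
have [z1 [az1 z1b] s1] := top_split_lift (AP _) lab full Dac_gensS1 alpha_beta1.
have [z2 [az2 z2b] s2] := top_split_lift (AP _) lab full Dac_gensS2 alpha_beta2.
have h0_01 : [set i3 0] \subset [set i3 0; i3 1] by rewrite sub1set set21.
have h1_01 : [set i3 1] \subset [set i3 0; i3 1] by rewrite sub1set set22.
have h0_02 : [set i3 0] \subset [set i3 0; i3 2] by rewrite sub1set set21.
have h2_02 : [set i3 2] \subset [set i3 0; i3 2] by rewrite sub1set set22.
have h1_12 : [set i3 1] \subset [set i3 1; i3 2] by rewrite sub1set set21.
have h2_12 : [set i3 2] \subset [set i3 1; i3 2] by rewrite sub1set set22.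
apply: (Dac_no_triangle s0 s1 s2 (link_pair h0_01 h1_01 az0 z0b az1 z1b)
  (link_pair h0_02 h2_02 az0 z0b az2 z2b) (link_pair h1_12 h2_12 az1 z1b az2 z2b)).
exact: psi_trans (@phi_join setT) _ _ _.
Qed.
End Interval.

Lemma psi0_eq0 (x y : L set0) : (forall i, almost_permutable (L [set i])) ->
  psi (phi set0) x y = set0.
Proof.
move=> AP; case: (Dac0 (psi_Dac x y)) => // full; exfalso.
apply: (psi0_interval_neq_setT AP (lat_le_meet_join x y)).
apply/eqP; rewrite eqEsubset subsetT -full /=.
by apply: (psi_mono (@phi_join set0)); exact: princ_meet_join.
Qed.

Lemma no_lifting : ~ (forall i, almost_permutable (L [set i])).
Proof.
move=> AP; have [t [ct tT]] := phi_onto Dac0_setT.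
have t0 : subrel t (@cong_zero _).
  by move=> x y _; apply: (psi_eq0 (@phi_inj _) (phi_zero _)); exact: psi0_eq0.
have := ph_mono (@phi_join _) ct (compact_zero _) t0.
by rewrite tT phi_zero subset0 => /eqP /setP /(_ ord0); rewrite !inE.
Qed.
End Lifting.

Theorem theorem7p1 :
  ~ exists (L : {set 'I_3} -> lattice)
           (f : forall p q : {set 'I_3}, p \subset q -> L p -> L q),
      [/\ @is_lattice_diagram L f,
          @lifts_Dac L f &
          (forall i : 'I_3, almost_permutable (L [set i]))].
Proof.
case=> L [f [[f_hom _ f_comp] [phi lifts] AP]].
case: lifts => phi_Dac [phi_inj [phi_onto [phi_join [phi_zero phi_nat]]]].
exact: no_lifting f_hom f_comp phi_Dac phi_inj phi_onto phi_join phi_zero phi_nat AP.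
Qed.
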